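(* Let $c\in\mathbb R$ and let $\mu\ge0$ be a $C^2$ solution of $-c\partial_\xi\mu=\theta\partial_{\xi\xi}\mu+\alpha\partial_{\theta\theta}\mu+r\mu(1-\nu)$ on $\mathbb R\times\Theta$ with $\partial_\theta\mu(\xi,\theta_{\min})=\partial_\theta\mu(\xi,\theta_{\max})=0$, such that $\nu$ is locally bounded. Then for every $0<b<\infty$ there exists $C(b)<\infty$ such that $$\mu(\xi,\theta)\le C(b)\,\mu(\xi,\theta')\quad\text{for all }(\xi,\theta,\theta')\in(-b,b)\times\Theta\times\Theta.$$
   Context: $\Theta=(\theta_{\min},\theta_{\max})$, $0<\theta_{\min}<\theta_{\max}<\infty$, $\alpha,r>0$; $\nu(\xi)=\int_\Theta\mu(\xi,\theta)d\theta$. *)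

From Stdlib Require Import Reals Lra.
Open Scope R_scope.

Definition in_closed (tmin tmax t : R) : Prop := tmin <= t <= tmax.

Definition cont_strip (tmin tmax : R) (f : R -> R -> R) : Prop :=
  forall x y, in_closed tmin tmax y ->
    forall eps, 0 < eps -> exists delta, 0 < delta /\
      forall x' y', in_closed tmin tmax y' ->
        Rabs (x' - x) < delta -> Rabs (y' - y) < delta ->
        Rabs (f x' y' - f x y) < eps.

Definition pderiv_xi (tmin tmax : R) (f g : R -> R -> R) : Prop :=
  forall x y, in_closed tmin tmax y ->
    derivable_pt_lim (fun s => f s y) x (g x y).

(* g is the partial derivative of f in the second variable (theta) on the
   closed strip; at the endpoints this is the one-sided derivative. *)
Definition pderiv_theta (tmin tmax : R) (f g : R -> R -> R) : Prop :=
  forall x y, in_closed tmin tmax y ->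
    forall eps, 0 < eps -> exists delta, 0 < delta /\
      forall h, h <> 0 -> Rabs h < delta -> in_closed tmin tmax (y + h) ->
        Rabs ((f x (y + h) - f x y) / h - g x y) < eps.

Definition C2_strip (tmin tmax : R) (f f1 f2 f11 f22 : R -> R -> R) : Prop :=
  exists f12 f21 : R -> R -> R,
    pderiv_xi tmin tmax f f1 /\ pderiv_theta tmin tmax f f2 /\
    pderiv_xi tmin tmax f1 f11 /\ pderiv_theta tmin tmax f1 f12 /\
    pderiv_xi tmin tmax f2 f21 /\ pderiv_theta tmin tmax f2 f22 /\
    cont_strip tmin tmax f /\ cont_strip tmin tmax f1 /\
    cont_strip tmin tmax f2 /\ cont_strip tmin tmax f11 /\
    cont_strip tmin tmax f12 /\ cont_strip tmin tmax f21 /\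
    cont_strip tmin tmax f22.

(* On a rectangle [-b, b] x [tmin, tmax] either mu vanishes identically
   (take C = 0), or mu is positive at one point; we show that it is then
   positive on the whole closed rectangle, and C = max mu / min mu works by
   compactness.  Positivity spreads by a comparison argument with a truncated
   Gaussian barrier  w = mu - eps (E - K),  E = exp (-lam |(x, y) - (a, b)|^2):
   for lam large, E is a strict subsolution of the linear operator
   y d_xx + alpha d_yy + c d_x + Q away from its centre, so w cannot have a
   negative minimum in the interior (by the equation, with the zeroth-order
   coefficient -r (1 - nu) <= Q from local boundedness of nu), nor on the
   horizontal edges (Neumann condition versus the slope of E). *)

From Stdlib Require Import Reals Lra.
From mathcomp Require Import all_boot all_order all_algebra.
From mathcomp Require Import boolp classical_sets interval_inference reals topology.
From mathcomp Require Import normedtype derive Rstruct Rstruct_topology.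
Import Order.TTheory GRing.Theory Num.Theory.
Import numFieldNormedType.Exports.
Open Scope R_scope.

Definition cont_rect (a b c d : R) (f : R -> R -> R) : Prop :=
  forall x y, a <= x <= b -> c <= y <= d ->
    forall eps, 0 < eps -> exists delta, 0 < delta /\
      forall x' y', a <= x' <= b -> c <= y' <= d ->
        Rabs (x' - x) < delta -> Rabs (y' - y) < delta ->
        Rabs (f x' y' - f x y) < eps.

Lemma rect_min_attained (f : R -> R -> R) (a b c d : R) :
  a <= b -> c <= d -> cont_rect a b c d f ->
  exists x0 y0, a <= x0 <= b /\ c <= y0 <= d /\
    forall x y, a <= x <= b -> c <= y <= d -> f x0 y0 <= f x y.
Proof.
move=> ab cd fc.
Local Open Scope classical_set_scope.
Local Open Scope ring_scope.
have itvP (u l h : R) : (u \in `[l, h]) <-> Rle l u /\ Rle u h.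
  by rewrite in_itv /=; split=> [/andP[/RleP ? /RleP ?] | [? ?]] //; apply/andP; split; apply/RleP.
set A := `[a, b] `*` `[c, d].
have A0 : A !=set0.
  by exists (a, c); split; apply/itvP => /=; lra.
have cA : compact A by apply: compact_setX; apply: segment_compact.
have [[x0 y0] pA pmin] : exists2 p, p \in A &
    forall q, q \in A -> f p.1 p.2 <= f q.1 q.2.
  apply: compact_EVT_min => //.
  apply/subspace_continuousP => -[x y] [/= /itvP xab /itvP ycd].
  apply/(cvgrPdist_lt (V:=R^o)) => e /RltP e0.
  have [dl [dl0 Hd]] := fc x y xab ycd e e0.
  rewrite near_withinE; apply/nbhs_ballP; exists dl; first by apply/RltP.
  move=> [x' y'] [/= bx by'] [/= /itvP xA /itvP yA].
  move: bx by'; rewrite /ball /from_subspace /= => /RltP bx /RltP by'.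
  apply/RltP; rewrite /Num.norm /=.
  change (Rlt (Rabs (Rminus x x')) dl) in bx.
  change (Rlt (Rabs (Rminus y y')) dl) in by'.
  change (Rlt (Rabs (Rminus (f x y) (f x' y'))) e).
  by rewrite Rabs_minus_sym; apply: Hd => //; rewrite Rabs_minus_sym.
move: pA; rewrite inE => -[/= /itvP hx0 /itvP hy0].
exists x0, y0; split; [done | split; [done |]].
move=> x y hx hy; apply/RleP; apply: (pmin (x, y)).
by rewrite inE; split; apply/itvP.
Qed.

From Coquelicot Require Import Coquelicot.
From mathcomp Require Import ssreflect.
Open Scope R_scope.

Lemma rect_max_attained (f : R -> R -> R) (a b c d : R) :
  a <= b -> c <= d -> cont_rect a b c d f ->
  exists x0 y0, a <= x0 <= b /\ c <= y0 <= d /\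
    forall x y, a <= x <= b -> c <= y <= d -> f x y <= f x0 y0.
Proof.
move=> ab cd fc.
have fc' : cont_rect a b c d (fun x y => - f x y).
  move=> x y hx hy e he; have [dl [hdl H]] := fc x y hx hy e he.
  exists dl; split=> // x' y' hx' hy' h1 h2.
  have -> : - f x' y' - - f x y = - (f x' y' - f x y) by ring.
  by rewrite Rabs_Ropp; apply: H.
have [x0 [y0 [hx0 [hy0 hmin]]]] := rect_min_attained _ a b c d ab cd fc'.
exists x0, y0; split=> //; split=> // x y hx hy.
by have := hmin x y hx hy; lra.
Qed.

Lemma cont_rect_of_strip (tmin tmax a b : R) (f : R -> R -> R) :
  cont_strip tmin tmax f -> cont_rect a b tmin tmax f.
Proof.
move=> fc x y _ hy e he; have [dl [hdl H]] := fc x y hy e he.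
by exists dl; split=> // x' y' _ hy'; apply: H.
Qed.

(* The estimate behind linearity of limits: |A - k B| < e as soon as
   |A| < e / 2 and |B| < e / (2 (|k| + 1)). *)
Lemma abs_sub_scal_lt (k A B e : R) :
  Rabs A < e / 2 -> Rabs B < e / (2 * (Rabs k + 1)) -> Rabs (A - k * B) < e.
Proof.
move=> hA hB.
have hk : 0 < Rabs k + 1 by have := Rabs_pos k; lra.
have hkB : Rabs k * Rabs B <= e / 2.
  have -> : e / 2 = (Rabs k + 1) * (e / (2 * (Rabs k + 1))) by field; lra.
  by apply: Rmult_le_compat; try apply: Rabs_pos; lra.
apply: Rle_lt_trans (Rabs_triang _ _) _.
by rewrite Rabs_Ropp Rabs_mult; lra.
Qed.

Lemma scal_tol_pos (k e : R) : 0 < e -> 0 < e / (2 * (Rabs k + 1)).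
Proof. by move=> he; apply: Rdiv_lt_0_compat => //; have := Rabs_pos k; lra. Qed.

Lemma cont_strip_sub_scal (tmin tmax k : R) (f g : R -> R -> R) :
  cont_strip tmin tmax f -> (forall x y, continuity_2d_pt g x y) ->
  cont_strip tmin tmax (fun x y => f x y - k * g x y).
Proof.
move=> fc gc x y hy e he.
have [d1 [hd1 H1]] := fc x y hy (e / 2) ltac:(lra).
have [d2 /= H2] := gc x y (mkposreal _ (scal_tol_pos k e he)).
exists (Rmin d1 d2); split; first by apply: Rmin_pos => //; apply: cond_pos.
move=> x' y' hy' hx hy2.
have := Rmin_l d1 d2; have := Rmin_r d1 d2 => hd2' hd1'.
have -> : f x' y' - k * g x' y' - (f x y - k * g x y)
          = (f x' y' - f x y) - k * (g x' y' - g x y) by ring.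
by apply: abs_sub_scal_lt; [apply: H1 | apply: H2] => //; lra.
Qed.

Lemma interior_approx (tmin tmax y d : R) :
  tmin < tmax -> tmin <= y <= tmax -> 0 < d ->
  exists y', tmin < y' < tmax /\ Rabs (y' - y) < d.
Proof.
move=> ht hy hd.
set s := Rmin (1 / 2) (d / (2 * (tmax - tmin))).
have hs1 : s <= 1 / 2 by apply: Rmin_l.
have hs0 : 0 < s by apply: Rmin_pos; [lra | apply: Rdiv_lt_0_compat; lra].
have hsT : s * (tmax - tmin) <= d / 2.
  have -> : d / 2 = d / (2 * (tmax - tmin)) * (tmax - tmin) by field; lra.
  by apply: Rmult_le_compat_r; [lra | apply: Rmin_r].
exists (y + s * ((tmin + tmax) / 2 - y)); split; first by split; nra.
by rewrite Rplus_minus_l; apply/Rabs_lt_between; split; nra.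
Qed.

(* One-sided derivative of F at y in the direction s (s = 1: from the right,
   s = -1: from the left). *)
Definition one_sided_deriv (s : R) (F : R -> R) (y l : R) : Prop :=
  forall eps, 0 < eps -> exists delta, 0 < delta /\
    forall h, 0 < h < delta -> Rabs ((F (y + s * h) - F y) / (s * h) - l) < eps.

Lemma Rabs_unit_mult (s h : R) : s = 1 \/ s = -1 -> 0 < h -> Rabs (s * h) = h.
Proof. by case=> -> hh; [rewrite Rabs_right | rewrite Rabs_left]; lra. Qed.

Lemma one_sided_of_derivable (s : R) (F : R -> R) (y l : R) :
  s = 1 \/ s = -1 -> derivable_pt_lim F y l -> one_sided_deriv s F y l.
Proof.
move=> hs hF e he; have [dl H] := hF e he.
exists dl; split=> [|h hh]; first exact: cond_pos.
have hsh := Rabs_unit_mult s h hs (proj1 hh).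
apply: H; last by rewrite hsh; lra.
by move=> h0; move: hsh; rewrite h0 Rabs_R0; lra.
Qed.

Lemma one_sided_of_pderiv_theta (tmin tmax s eta : R) (f g : R -> R -> R) (x y : R) :
  s = 1 \/ s = -1 -> 0 < eta -> pderiv_theta tmin tmax f g ->
  in_closed tmin tmax y -> (forall h, 0 < h < eta -> in_closed tmin tmax (y + s * h)) ->
  one_sided_deriv s (f x) y (g x y).
Proof.
move=> hs heta hd hy hin e he; have [dl [hdl H]] := hd x y hy e he.
exists (Rmin dl eta); split=> [|h hh]; first exact: Rmin_pos.
have hsh := Rabs_unit_mult s h hs (proj1 hh).
have hdl' := Rmin_l dl eta; have heta' := Rmin_r dl eta.
apply: H; [|rewrite hsh; lra | apply: hin; lra].
by move=> h0; move: hsh; rewrite h0 Rabs_R0; lra.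
Qed.

Lemma one_sided_deriv_sub_scal (s k : R) (F G : R -> R) (y lF lG : R) :
  one_sided_deriv s F y lF -> one_sided_deriv s G y lG ->
  one_sided_deriv s (fun t => F t - k * G t) y (lF - k * lG).
Proof.
move=> hF hG e he.
have [d1 [hd1 H1]] := hF (e / 2) ltac:(lra).
have [d2 [hd2 H2]] := hG _ (scal_tol_pos k e he).
exists (Rmin d1 d2); split=> [|h hh]; first exact: Rmin_pos.
have := Rmin_l d1 d2; have := Rmin_r d1 d2 => hd2' hd1'.
have -> : (F (y + s * h) - k * G (y + s * h) - (F y - k * G y)) / (s * h) - (lF - k * lG)
   = ((F (y + s * h) - F y) / (s * h) - lF) - k * ((G (y + s * h) - G y) / (s * h) - lG)
  by rewrite /Rdiv; ring.
by apply: abs_sub_scal_lt; [apply: H1 | apply: H2]; lra.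
Qed.

Lemma one_sided_min (s eta : R) (F : R -> R) (y l : R) :
  s = 1 \/ s = -1 -> 0 < eta -> one_sided_deriv s F y l ->
  (forall h, 0 < h < eta -> F y <= F (y + s * h)) -> 0 <= s * l.
Proof.
move=> hs heta hF hmin; apply: Rnot_lt_le => hneg.
have hl : 0 < Rabs l by case: hs => hs; subst s; apply: Rabs_pos_lt; lra.
have [dl [hdl H]] := hF (Rabs l) hl.
set h := Rmin dl eta / 2.
have hh : 0 < h < Rmin dl eta by have := Rmin_pos dl eta hdl heta; rewrite /h; lra.
have /Rabs_lt_between A := H h ltac:(have := Rmin_l dl eta; lra).
have B := hmin h ltac:(have := Rmin_r dl eta; lra).
case: hs => hs; subst s.
- have : 0 <= (F (y + 1 * h) - F y) / (1 * h) by apply: Rdiv_le_0_compat; lra.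
  by rewrite Rabs_left in A; lra.
- have : (F (y + -1 * h) - F y) / (-1 * h) <= 0.
    have -> : (F (y + -1 * h) - F y) / (-1 * h) = - ((F (y + -1 * h) - F y) / h)
      by field; lra.
    have : 0 <= (F (y + -1 * h) - F y) / h by apply: Rdiv_le_0_compat; lra.
    lra.
  by rewrite Rabs_right in A; lra.
Qed.

Lemma local_min_second_order (f f1 : R -> R) (x0 d f2 : R) :
  0 < d ->
  (forall x, Rabs (x - x0) < d -> derivable_pt_lim f x (f1 x)) ->
  derivable_pt_lim f1 x0 f2 ->
  (forall x, Rabs (x - x0) < d -> f x0 <= f x) -> f1 x0 = 0 /\ 0 <= f2.
Proof.
move=> hd hf hf1 hmin.
have near_x0 x : x0 - d < x < x0 + d -> Rabs (x - x0) < d by move=> hx; apply/Rabs_lt_between; lra.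
have crit : f1 x0 = 0.
  have hx0 : derivable_pt_lim f x0 (f1 x0) by apply: hf; rewrite Rminus_diag Rabs_R0.
  apply: (deriv_minimum f (x0 - d) (x0 + d) x0 (exist _ (f1 x0) hx0)); try lra.
  by move=> x hx1 hx2; apply: hmin; apply: near_x0.
split=> //; apply: Rnot_lt_le => hneg.
have [dl H] := hf1 (- f2 / 2) ltac:(lra).
set h := Rmin dl d / 2.
have hh : 0 < h < Rmin dl d by have := Rmin_pos dl d (cond_pos dl) hd; rewrite /h; lra.
have hdl := Rmin_l dl d; have hdd := Rmin_r dl d.
(* f1 < 0 just right of x0, so f decreases there *)
have [cc [hmvt hcc]] := MVT_cor2 f f1 x0 (x0 + h) ltac:(lra)
  ltac:(by move=> cc hc; apply: hf; apply: near_x0; lra).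
have : f1 cc < 0.
  have /Rabs_lt_between := H (cc - x0) ltac:(lra) ltac:(rewrite Rabs_right; lra).
  rewrite Rplus_minus crit Rminus_0_r => -[_ hq].
  have hpos : 0 < cc - x0 by lra.
  apply: Rnot_le_lt => hge.
  have : 0 <= f1 cc / (cc - x0) by apply: Rdiv_le_0_compat.
  lra.
have := hmin (x0 + h) ltac:(apply: near_x0; lra).
rewrite Rplus_minus_l in hmvt; nra.
Qed.

Lemma derivable_sub_scal (f g : R -> R) (k x lf lg : R) :
  derivable_pt_lim f x lf -> derivable_pt_lim g x lg ->
  derivable_pt_lim (fun s => f s - k * g s) x (lf - k * lg).
Proof.
move=> hf hg.
exact: (derivable_pt_lim_minus f (mult_real_fct k g) x lf (k * lg) hf
          (derivable_pt_lim_scal g k x lg hg)).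
Qed.

Lemma derivable_of_pderiv_theta (tmin tmax : R) (f g : R -> R -> R) (x y : R) :
  pderiv_theta tmin tmax f g -> tmin < y < tmax ->
  derivable_pt_lim (f x) y (g x y).
Proof.
move=> hd hy e he.
have [dl [hdl H]] := hd x y ltac:(rewrite /in_closed; lra) e he.
have hd' : 0 < Rmin dl (Rmin (y - tmin) (tmax - y)) by repeat apply: Rmin_pos; lra.
exists (mkposreal _ hd') => h hh /= /Rabs_lt_between hlt.
have hdl' := Rmin_l dl (Rmin (y - tmin) (tmax - y)).
have hd2 := Rmin_r dl (Rmin (y - tmin) (tmax - y)).
have hd3 := Rmin_l (y - tmin) (tmax - y); have hd4 := Rmin_r (y - tmin) (tmax - y).
apply: H => //; [apply/Rabs_lt_between | rewrite /in_closed]; lra.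
Qed.

Definition gauss (lam a b x y : R) : R :=
  exp (- lam * ((x - a) * (x - a) + (y - b) * (y - b))).

Lemma gauss_pos (lam a b x y : R) : 0 < gauss lam a b x y.
Proof. exact: exp_pos. Qed.

Lemma exp_le_mono (u v : R) : u <= v -> exp u <= exp v.
Proof. by case/Rle_lt_or_eq_dec=> [/exp_increasing /Rlt_le | ->] //; apply: Rle_refl. Qed.

Lemma gauss_le (lam a b x y s : R) : 0 <= lam ->
  s <= (x - a) * (x - a) + (y - b) * (y - b) -> gauss lam a b x y <= exp (- lam * s).
Proof. by move=> hl hs; apply: exp_le_mono; nra. Qed.

Lemma gauss_gt (lam a b x y s : R) : 0 < lam ->
  (x - a) * (x - a) + (y - b) * (y - b) < s -> exp (- lam * s) < gauss lam a b x y.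
Proof. by move=> hl hs; apply: exp_increasing; nra. Qed.

(* First and second partial derivatives of the bump (shifted by a constant K
   where that is how it enters the barrier). *)
Lemma gauss_dx (lam a b K x y : R) :
  derivable_pt_lim (fun s => gauss lam a b s y - K) x (-2 * lam * (x - a) * gauss lam a b x y).
Proof. apply/is_derive_Reals; rewrite /gauss; auto_derive; first done; rewrite /Rminus; ring. Qed.

Lemma gauss_dy (lam a b K x y : R) :
  derivable_pt_lim (fun s => gauss lam a b x s - K) y (-2 * lam * (y - b) * gauss lam a b x y).
Proof. apply/is_derive_Reals; rewrite /gauss; auto_derive; first done; rewrite /Rminus; ring. Qed.

Lemma gauss_dxx (lam a b x y : R) :
  derivable_pt_lim (fun s => -2 * lam * (s - a) * gauss lam a b s y) x
    ((4 * lam * lam * (x - a) * (x - a) - 2 * lam) * gauss lam a b x y).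
Proof. apply/is_derive_Reals; rewrite /gauss; auto_derive; first done; rewrite /Rminus; ring. Qed.

Lemma gauss_dyy (lam a b x y : R) :
  derivable_pt_lim (fun s => -2 * lam * (s - b) * gauss lam a b x s) y
    ((4 * lam * lam * (y - b) * (y - b) - 2 * lam) * gauss lam a b x y).
Proof. apply/is_derive_Reals; rewrite /gauss; auto_derive; first done; rewrite /Rminus; ring. Qed.

Lemma gauss_continuous (lam a b K x y : R) :
  continuity_2d_pt (fun x y => gauss lam a b x y - K) x y.
Proof.
apply: continuity_2d_pt_minus; last exact: continuity_2d_pt_const.
apply: (continuity_1d_2d_pt_comp exp); first exact: derivable_continuous_pt (derivable_pt_exp _).
apply: continuity_2d_pt_mult; first exact: continuity_2d_pt_const.
apply: continuity_2d_pt_plus; apply: continuity_2d_pt_mult;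
  apply: continuity_2d_pt_minus; by [apply: continuity_2d_pt_id1 | apply: continuity_2d_pt_id2
                                    | apply: continuity_2d_pt_const].
Qed.

(* (y d_xx + alpha d_yy + c d_x) E / E  for the Gaussian E of rate lam,
   at offset (X, Y) from its centre. *)
Definition gauss_symbol (lam alpha c y X Y : R) : R :=
  y * (4 * lam * lam * X * X - 2 * lam) + alpha * (4 * lam * lam * Y * Y - 2 * lam)
  - 2 * lam * c * X.

Lemma steep_gauss_subsolution (tmin tmax alpha c rho R Q : R) :
  0 < tmin -> tmin <= tmax -> 0 < alpha -> 0 < rho -> 0 <= R -> 0 <= Q ->
  exists lam, 0 < lam /\ forall y X Y, tmin <= y <= tmax -> Rabs X <= R ->
    rho * rho <= X * X + Y * Y ->
    Q < gauss_symbol lam alpha c y X Y.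
Proof.
move=> htmin htt halpha hrho hR hQ.
set kap := Rmin tmin alpha.
have [hk0 [hk1 hk2]] : 0 < kap /\ kap <= tmin /\ kap <= alpha.
  by split; [apply: Rmin_pos | split; [apply: Rmin_l | apply: Rmin_r]].
set K1 := tmax + alpha + Rabs c * R.
have hcR : 0 <= Rabs c * R by apply: Rmult_le_pos => //; apply: Rabs_pos.
have hkr : 0 < kap * (rho * rho) by apply: Rmult_lt_0_compat; nra.
have hq : 0 <= (K1 + Q + 1) / (kap * (rho * rho)) by apply: Rdiv_le_0_compat; rewrite /K1; lra.
exists ((K1 + Q + 1) / (kap * (rho * rho)) + 1); set lam := _ + 1.
have hlam : lam * (kap * (rho * rho)) = K1 + Q + 1 + kap * (rho * rho).
  by rewrite /lam; field; lra.
have hlam0 : 1 <= lam by rewrite /lam; lra.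
split; first lra.
move=> y X Y hy hX hXY.
(* the quadratic terms dominate: 4 lam^2 (y X^2 + alpha Y^2) >= 4 lam^2 kap rho^2 *)
have hquad : kap * (rho * rho) <= y * (X * X) + alpha * (Y * Y) by nra.
have hquad4 : 4 * lam * lam * (kap * (rho * rho))
              <= 4 * lam * lam * (y * (X * X) + alpha * (Y * Y)).
  by apply: Rmult_le_compat_l => //; nra.
have hsteep : 4 * lam * lam * (kap * (rho * rho)) = 4 * lam * (K1 + Q + 1 + kap * (rho * rho)).
  by rewrite -hlam; ring.
(* the first-order and drift terms are at most 2 lam K1 *)
have hdrift : c * X <= Rabs c * R.
  apply: Rle_trans (Rle_abs _) _; rewrite Rabs_mult.
  by apply: Rmult_le_compat_l => //; apply: Rabs_pos.
have hdrift2 : 2 * lam * (c * X) <= 2 * lam * (Rabs c * R) by apply: Rmult_le_compat_l; lra.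
have hdiff : 2 * lam * y <= 2 * lam * tmax by apply: Rmult_le_compat_l; lra.
have hQlam : Q <= lam * Q by nra.
have hK1 : 0 <= lam * K1 by apply: Rmult_le_pos; rewrite /K1; lra.
have hkr' : 0 <= lam * (kap * (rho * rho)) by apply: Rmult_le_pos; lra.
rewrite /gauss_symbol.
have -> : y * (4 * lam * lam * X * X - 2 * lam) + alpha * (4 * lam * lam * Y * Y - 2 * lam)
          - 2 * lam * c * X = 4 * lam * lam * (y * (X * X) + alpha * (Y * Y))
          - 2 * lam * y - 2 * lam * alpha - 2 * lam * (c * X) by ring.
rewrite /K1 in hsteep hK1; lra.
Qed.

Lemma no_touching_from_below (y alpha c r nu mu mu1 mu11 mu22 eps E Ex Exx Eyy Q : R) :
  0 < eps -> 0 <= Q -> 0 <= y -> 0 <= alpha ->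
  - c * mu1 = y * mu11 + alpha * mu22 + r * mu * (1 - nu) ->
  mu1 = eps * Ex -> eps * Exx <= mu11 -> eps * Eyy <= mu22 ->
  0 <= mu < eps * E -> - (r * (1 - nu)) <= Q ->
  Q * E < y * Exx + alpha * Eyy + c * Ex -> False.
Proof.
move=> heps hQ hy halpha hpde h1 h11 h22 [hmu0 hmu] hnu hsub.
have hzero : - (r * mu * (1 - nu)) <= Q * (eps * E).
  have : - (r * mu * (1 - nu)) <= mu * Q by nra.
  nra.
have : eps * (Q * E) < eps * (y * Exx + alpha * Eyy + c * Ex) by apply: Rmult_lt_compat_l.
have : y * (eps * Exx) <= y * mu11 by apply: Rmult_le_compat_l.
have : alpha * (eps * Eyy) <= alpha * mu22 by apply: Rmult_le_compat_l.
nra.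
Qed.

Lemma coord_le_of_disc (u v s : R) : u * u + v * v <= s * s -> 0 <= s -> Rabs u <= s.
Proof. by move=> huv hs; apply: Rabs_le; split; nra. Qed.

Lemma coord_lt_of_disc (u v s : R) : u * u + v * v < s * s -> 0 <= s -> Rabs u < s.
Proof. by move=> huv hs; apply/Rabs_lt_between; split; nra. Qed.

Definition barrier (mu : R -> R -> R) (lam a b eps K x y : R) : R :=
  mu x y - eps * (gauss lam a b x y - K).

Section Propagation.

Variables (tmin tmax alpha r c : R) (mu mu1 mu2 mu11 mu22 : R -> R -> R) (nu : R -> R).
Hypothesis Htmin : 0 < tmin.
Hypothesis Htt : tmin < tmax.
Hypothesis Halpha : 0 < alpha.
Hypothesis HC2 : C2_strip tmin tmax mu mu1 mu2 mu11 mu22.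
Hypothesis Hnonneg : forall xi th, tmin < th < tmax -> 0 <= mu xi th.
Hypothesis Hpde : forall xi th, tmin < th < tmax ->
  - c * mu1 xi th = th * mu11 xi th + alpha * mu22 xi th + r * mu xi th * (1 - nu xi).
Hypothesis Hbc : forall xi, mu2 xi tmin = 0 /\ mu2 xi tmax = 0.
Hypothesis Hloc : forall b, 0 < b -> exists M, forall xi, - b < xi < b -> Rabs (nu xi) <= M.

Lemma mu_regular :
  cont_strip tmin tmax mu /\ pderiv_xi tmin tmax mu mu1 /\ pderiv_xi tmin tmax mu1 mu11 /\
  pderiv_theta tmin tmax mu mu2 /\ pderiv_theta tmin tmax mu2 mu22.
Proof. by case: HC2 => [f12 [f21 [D1 [D2 [D11 [_ [_ [D22 [C0 _]]]]]]]]]. Qed.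

Lemma mu_nonneg (x y : R) : tmin <= y <= tmax -> 0 <= mu x y.
Proof.
have [C0 _] := mu_regular.
move=> hy; apply: Rnot_lt_le => hneg.
have [d [hd H]] := C0 x y hy (- mu x y / 2) ltac:(lra).
have [y' [hy' hyy]] := interior_approx tmin tmax y d Htt hy hd.
have /Rabs_lt_between := H x y' ltac:(rewrite /in_closed; lra)
                            ltac:(rewrite Rminus_diag Rabs_R0; lra) hyy.
by have := Hnonneg x y' hy'; lra.
Qed.

(* At a horizontal edge the Neumann condition kills the theta-derivative of
   mu, while the bump increases towards its centre b: the barrier decreases
   into the strip and cannot be minimal there. *)
Lemma barrier_min_not_on_edge (lam a b eps K x0 ye s : R) :
  0 < lam -> 0 < eps -> s = 1 \/ s = -1 -> in_closed tmin tmax ye -> mu2 x0 ye = 0 ->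
  s * (ye - b) < 0 ->
  (forall h, 0 < h < tmax - tmin -> in_closed tmin tmax (ye + s * h)) ->
  (forall h, 0 < h < tmax - tmin ->
     barrier mu lam a b eps K x0 ye <= barrier mu lam a b eps K x0 (ye + s * h)) ->
  False.
Proof.
have [_ [_ [_ [D2 _]]]] := mu_regular.
move=> hlam heps hs hye hmu2 hsign hin hmin.
have hD : one_sided_deriv s (fun t => barrier mu lam a b eps K x0 t) ye
            (mu2 x0 ye - eps * (-2 * lam * (ye - b) * gauss lam a b x0 ye)).
  apply: (one_sided_deriv_sub_scal s eps (mu x0) (fun t => gauss lam a b x0 t - K)).
  - by apply: (one_sided_of_pderiv_theta tmin tmax s (tmax - tmin)) => //; lra.
  - by apply: one_sided_of_derivable => //; apply: gauss_dy.
have := one_sided_min s (tmax - tmin) _ ye _ hs ltac:(lra) hD hmin.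
have hE := gauss_pos lam a b x0 ye.
have hpos : 0 < 2 * eps * lam * gauss lam a b x0 ye by repeat apply: Rmult_lt_0_compat; lra.
rewrite hmu2.
have -> : s * (0 - eps * (-2 * lam * (ye - b) * gauss lam a b x0 ye))
          = 2 * eps * lam * gauss lam a b x0 ye * (s * (ye - b)) by ring.
nra.
Qed.

(* At an interior negative minimum of the barrier, mu would touch eps E from
   below to second order, which the equation forbids where E is a strict
   subsolution. *)
Lemma barrier_min_not_interior (lam a b eps K Q x0 y0 d : R) :
  0 < eps -> 0 < K -> 0 <= Q -> 0 < d -> tmin < y0 < tmax ->
  d <= y0 - tmin -> d <= tmax - y0 ->
  - (r * (1 - nu x0)) <= Q -> Q < gauss_symbol lam alpha c y0 (x0 - a) (y0 - b) ->
  barrier mu lam a b eps K x0 y0 < 0 ->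
  (forall x y, Rabs (x - x0) < d -> Rabs (y - y0) < d ->
     barrier mu lam a b eps K x0 y0 <= barrier mu lam a b eps K x y) ->
  False.
Proof.
have [_ [D1 [D11 [D2 D22]]]] := mu_regular.
move=> heps hK hQ hd hy0 hd1 hd2 hnu hsym hneg hmin.
have hy0c : in_closed tmin tmax y0 by rewrite /in_closed; lra.
have h00 : Rabs (x0 - x0) < d /\ Rabs (y0 - y0) < d by rewrite !Rminus_diag Rabs_R0; split.
set E := gauss lam a b x0 y0.
have [hx1 hx2] := local_min_second_order (fun s => barrier mu lam a b eps K s y0)
  (fun s => mu1 s y0 - eps * (-2 * lam * (s - a) * gauss lam a b s y0)) x0 d
  (mu11 x0 y0 - eps * ((4 * lam * lam * (x0 - a) * (x0 - a) - 2 * lam) * E)) hd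
  (fun s _ => derivable_sub_scal (fun s => mu s y0) _ eps s _ _ (D1 s y0 hy0c)
                (gauss_dx lam a b K s y0))
  (derivable_sub_scal (fun s => mu1 s y0) _ eps x0 _ _ (D11 x0 y0 hy0c) (gauss_dxx lam a b x0 y0))
  (fun s hs => hmin s y0 hs (proj2 h00)).
have in_open t : Rabs (t - y0) < d -> tmin < t < tmax by move=> /Rabs_lt_between; lra.
have [_ hy2] := local_min_second_order (fun t => barrier mu lam a b eps K x0 t)
  (fun t => mu2 x0 t - eps * (-2 * lam * (t - b) * gauss lam a b x0 t)) y0 d
  (mu22 x0 y0 - eps * ((4 * lam * lam * (y0 - b) * (y0 - b) - 2 * lam) * E)) hd
  (fun t ht => derivable_sub_scal (mu x0) _ eps t _ _
     (derivable_of_pderiv_theta tmin tmax mu mu2 x0 t D2 (in_open t ht)) (gauss_dy lam a b K x0 t))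
  (derivable_sub_scal (mu2 x0) _ eps y0 _ _
     (derivable_of_pderiv_theta tmin tmax mu2 mu22 x0 y0 D22 hy0) (gauss_dyy lam a b x0 y0))
  (fun t ht => hmin x0 t (proj1 h00) ht).
have hE : 0 < E by apply: gauss_pos.
rewrite /= -/E in hx1.
apply: (no_touching_from_below y0 alpha c r (nu x0) (mu x0 y0) (mu1 x0 y0) (mu11 x0 y0)
          (mu22 x0 y0) eps E (-2 * lam * (x0 - a) * E)
          ((4 * lam * lam * (x0 - a) * (x0 - a) - 2 * lam) * E)
          ((4 * lam * lam * (y0 - b) * (y0 - b) - 2 * lam) * E) Q) => //; try lra.
- exact: Hpde.
- move: hneg; rewrite /barrier -/E; have := mu_nonneg x0 y0 ltac:(lra).
  have : 0 < eps * K by apply: Rmult_lt_0_compat.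
  by move=> hepsK hmu hw; split; lra.
- have -> : y0 * ((4 * lam * lam * (x0 - a) * (x0 - a) - 2 * lam) * E)
          + alpha * ((4 * lam * lam * (y0 - b) * (y0 - b) - 2 * lam) * E)
          + c * (-2 * lam * (x0 - a) * E)
          = gauss_symbol lam alpha c y0 (x0 - a) (y0 - b) * E by rewrite /gauss_symbol; ring.
  exact: Rmult_lt_compat_r.
Qed.

(* Off the annulus the barrier is nonnegative: outside the R-disc E <= K and
   mu >= 0, inside the rho-disc mu >= m = 2 eps while E <= 1. *)
Lemma barrier_nonneg_off_annulus (lam a b rho R m x y : R) :
  0 < m -> 0 <= lam -> tmin <= y <= tmax ->
  (forall x y, tmin <= y <= tmax -> (x - a) * (x - a) + (y - b) * (y - b) <= rho * rho ->
     m <= mu x y) ->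
  R * R <= (x - a) * (x - a) + (y - b) * (y - b) \/
  (x - a) * (x - a) + (y - b) * (y - b) <= rho * rho ->
  0 <= barrier mu lam a b (m / 2) (exp (- lam * (R * R))) x y.
Proof.
move=> hm hlam hy Hin [hfar | hdisc]; rewrite /barrier.
- have := gauss_le lam a b x y (R * R) hlam hfar; have := mu_nonneg x y hy; nra.
- have := gauss_le lam a b x y 0 hlam ltac:(by apply: Rplus_le_le_0_compat; apply: Rle_0_sqr).
  rewrite Rmult_0_r exp_0; have := exp_pos (- lam * (R * R)); have := Hin x y hy hdisc; nra.
Qed.

(* Off
   the R-disc it dominates mu >= 0; on the rho-disc mu >= m beats eps E;
   in between a negative minimum is excluded at the edges and inside. *)
Lemma barrier_min_nonneg (lam a b rho R Q m x0 y0 : R) :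
  tmin < b < tmax -> 0 < rho -> 0 <= Q -> 0 < m -> 0 < lam ->
  (forall y X Y, tmin <= y <= tmax -> Rabs X <= R -> rho * rho <= X * X + Y * Y ->
     Q < gauss_symbol lam alpha c y X Y) ->
  (forall x y, tmin <= y <= tmax -> (x - a) * (x - a) + (y - b) * (y - b) <= rho * rho ->
     m <= mu x y) ->
  (forall x, Rabs (x - a) <= R -> - (r * (1 - nu x)) <= Q) ->
  a - R <= x0 <= a + R -> tmin <= y0 <= tmax ->
  (forall x y, a - R <= x <= a + R -> tmin <= y <= tmax ->
     barrier mu lam a b (m / 2) (exp (- lam * (R * R))) x0 y0
     <= barrier mu lam a b (m / 2) (exp (- lam * (R * R))) x y) ->
  0 <= barrier mu lam a b (m / 2) (exp (- lam * (R * R))) x0 y0.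
Proof.
move=> hb hrho hQ hm hlam Hsub Hin HQb hx0 hy0 hmin.
set K := exp (- lam * (R * R)); set w := barrier mu lam a b (m / 2) K.
have hK : 0 < K by apply: exp_pos.
apply: Rnot_lt_le => hneg.
case: (Rle_or_lt (R * R) ((x0 - a) * (x0 - a) + (y0 - b) * (y0 - b))) => [hfar | hnear].
  move: hneg; rewrite /w /K.
  by have := barrier_nonneg_off_annulus lam a b rho R m x0 y0 hm (Rlt_le _ _ hlam) hy0 Hin
               (or_introl hfar); lra.
case: (Rle_or_lt ((x0 - a) * (x0 - a) + (y0 - b) * (y0 - b)) (rho * rho)) => [hdisc | hannulus].
  move: hneg; rewrite /w /K.
  by have := barrier_nonneg_off_annulus lam a b rho R m x0 y0 hm (Rlt_le _ _ hlam) hy0 Hin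
               (or_intror hdisc); lra.
have hX : Rabs (x0 - a) < R := coord_lt_of_disc (x0 - a) (y0 - b) R hnear ltac:(nra).
have hw x y : Rabs (x - a) <= R -> tmin <= y <= tmax -> w x0 y0 <= w x y.
  by move=> /Rabs_le_between hx hy; apply: hmin => //; lra.
have hedge ye s : s = 1 \/ s = -1 -> in_closed tmin tmax ye -> mu2 x0 ye = 0 ->
    s * (ye - b) < 0 -> (forall h, 0 < h < tmax - tmin -> in_closed tmin tmax (ye + s * h)) ->
    y0 = ye -> False.
  move=> hs hye hmu2 hsign hin hy; subst y0.
  apply: (barrier_min_not_on_edge lam a b (m / 2) K x0 ye s) => // [|h hh]; first lra.
  by apply: hw; [lra | apply: hin].
case: (Rle_lt_or_eq_dec tmin y0 (proj1 hy0)) => [hbot | hbot]; last first.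
  apply: (hedge tmin 1) => //; first (by left); first (by rewrite /in_closed; lra);
    [exact: (proj1 (Hbc x0)) | lra | move=> h hh; rewrite /in_closed; lra].
case: (Rle_lt_or_eq_dec y0 tmax (proj2 hy0)) => [htop | htop]; last first.
  apply: (hedge tmax (-1)) => //; first (by right); first (by rewrite /in_closed; lra);
    [exact: (proj2 (Hbc x0)) | lra | move=> h hh; rewrite /in_closed; lra].
set d := Rmin (R - Rabs (x0 - a)) (Rmin (y0 - tmin) (tmax - y0)).
have hd0 : 0 < d by repeat apply: Rmin_pos; lra.
have hdx : d <= R - Rabs (x0 - a) := Rmin_l _ _.
have hdy1 : d <= y0 - tmin := Rle_trans _ _ _ (Rmin_r _ _) (Rmin_l _ _).
have hdy2 : d <= tmax - y0 := Rle_trans _ _ _ (Rmin_r _ _) (Rmin_r _ _).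
apply: (barrier_min_not_interior lam a b (m / 2) K Q x0 y0 d) => //; try lra.
- by apply: HQb; lra.
- by apply: Hsub => //; lra.
- move=> x y hx /Rabs_lt_between hy; apply: hw; last lra.
  have := Rabs_triang (x - x0) (x0 - a).
  have -> : x - x0 + (x0 - a) = x - a by ring.
  lra.
Qed.

Lemma positivity_spreads (a b rho R Q m : R) :
  tmin < b < tmax -> 0 < rho < R -> 0 <= Q -> 0 < m ->
  (forall x y, tmin <= y <= tmax -> (x - a) * (x - a) + (y - b) * (y - b) <= rho * rho ->
     m <= mu x y) ->
  (forall x, Rabs (x - a) <= R -> - (r * (1 - nu x)) <= Q) ->
  forall x y, tmin <= y <= tmax -> (x - a) * (x - a) + (y - b) * (y - b) < R * R ->
    0 < mu x y.
Proof.
have [C0 _] := mu_regular.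
move=> hb hR hQ hm Hin HQb x y hy hxy.
have [lam [hlam Hsub]] :=
  steep_gauss_subsolution tmin tmax alpha c rho R Q Htmin (Rlt_le _ _ Htt) Halpha
    ltac:(lra) ltac:(lra) hQ.
set K := exp (- lam * (R * R)); set w := barrier mu lam a b (m / 2) K.
have Cw : cont_rect (a - R) (a + R) tmin tmax w.
  by apply: cont_rect_of_strip; apply: cont_strip_sub_scal => //; apply: gauss_continuous.
have [x0 [y0 [hx0 [hy0 hmin]]]] :=
  rect_min_attained w (a - R) (a + R) tmin tmax ltac:(lra) ltac:(lra) Cw.
have hw0 : 0 <= w x0 y0 by apply: (barrier_min_nonneg lam a b rho R Q m) => //; lra.
have /Rabs_le_between hx := Rlt_le _ _ (coord_lt_of_disc (x - a) (y - b) R hxy ltac:(lra)).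
have hwxy := hmin x y ltac:(lra) hy.
have := gauss_gt lam a b x y (R * R) hlam hxy; rewrite -/K => hg.
have : 0 < m / 2 * (gauss lam a b x y - K) by apply: Rmult_lt_0_compat; lra.
by move: hw0 hwxy; rewrite /w /barrier; lra.
Qed.

Lemma positive_near (x1 y1 : R) : tmin <= y1 <= tmax -> 0 < mu x1 y1 ->
  exists yc rho, tmin < yc < tmax /\ 0 < rho /\
    forall x y, tmin <= y <= tmax -> (x - x1) * (x - x1) + (y - yc) * (y - yc) <= rho * rho ->
      mu x1 y1 / 2 <= mu x y.
Proof.
have [C0 _] := mu_regular.
move=> hy1 hpos.
have [d [hd H]] := C0 x1 y1 hy1 (mu x1 y1 / 2) ltac:(lra).
have [yc [hyc /Rabs_lt_between hyy]] := interior_approx tmin tmax y1 (d / 4) Htt hy1 ltac:(lra).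
exists yc, (d / 2); split=> //; split=> [|x y hy hdisc]; first lra.
have /Rabs_le_between hx := coord_le_of_disc (x - x1) (y - yc) (d / 2) hdisc ltac:(lra).
have /Rabs_le_between hy' : Rabs (y - yc) <= d / 2.
  by apply: (coord_le_of_disc _ (x - x1)) => //; lra.
have /Rabs_lt_between := H x y hy ltac:(apply/Rabs_lt_between; lra)
                                  ltac:(apply/Rabs_lt_between; lra).
lra.
Qed.

(* As nu is locally bounded, positivity of mu at one point of a rectangle
   spreads over the whole rectangle. *)
Lemma positive_on_rectangle (b x1 y1 : R) :
  0 < b -> - b <= x1 <= b -> tmin <= y1 <= tmax -> 0 < mu x1 y1 ->
  forall x y, - b <= x <= b -> tmin <= y <= tmax -> 0 < mu x y.
Proof.
move=> hb hx1 hy1 hpos x y hx hy.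
have [yc [rho [hyc [hrho Hin]]]] := positive_near x1 y1 hy1 hpos.
set R0 := 2 * b + (tmax - tmin) + rho + 1.
have [M HM] := Hloc (b + R0 + 1) ltac:(rewrite /R0; lra).
have hM : 0 <= M.
  by have := HM 0 ltac:(rewrite /R0; lra); have := Rabs_pos (nu 0); lra.
apply: (positivity_spreads x1 yc rho R0 (Rabs r * (1 + M)) (mu x1 y1 / 2)) => //; try lra.
- by rewrite /R0; lra.
- by apply: Rmult_le_pos; [apply: Rabs_pos | lra].
- move=> x' /Rabs_le_between hx'.
  have /Rabs_le_between hnu : Rabs (nu x') <= M by apply: HM; lra.
  apply: Rle_trans (Rle_abs _) _; rewrite Rabs_Ropp Rabs_mult.
  apply: Rmult_le_compat_l; first exact: Rabs_pos.
  by apply/Rabs_le_between; lra.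
- have h1 : (x - x1) * (x - x1) <= (2 * b) * (2 * b) by nra.
  have h2 : (y - yc) * (y - yc) <= (tmax - tmin) * (tmax - tmin) by nra.
  by rewrite /R0; nra.
Qed.

End Propagation.

(* A continuous function positive on a rectangle has comparable values there:
   C = max / min bounds every ratio. *)
Lemma ratio_bound_of_positive (f : R -> R -> R) (a b c d : R) :
  a <= b -> c <= d -> cont_rect a b c d f ->
  (forall x y, a <= x <= b -> c <= y <= d -> 0 < f x y) ->
  exists C, forall x y x' y', a <= x <= b -> c <= y <= d -> a <= x' <= b -> c <= y' <= d ->
    f x y <= C * f x' y'.
Proof.
move=> hab hcd fc fpos.
have [xm [ym [hxm [hym hmin]]]] := rect_min_attained f a b c d hab hcd fc.
have [xM [yM [hxM [hyM hmax]]]] := rect_max_attained f a b c d hab hcd fc.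
have hm := fpos xm ym hxm hym.
set C := f xM yM / f xm ym.
have hC : 0 <= C by apply: Rdiv_le_0_compat; [apply: Rlt_le; apply: fpos | ].
have hCm : f xM yM = C * f xm ym by rewrite /C; field; lra.
exists C => x y x' y' hx hy hx' hy'.
apply: Rle_trans (hmax x y hx hy) _; rewrite hCm.
exact: Rmult_le_compat_l (hmin x' y' hx' hy').
Qed.

Theorem propositionA1
  (tmin tmax alpha r c : R)
  (Htmin : 0 < tmin) (Htt : tmin < tmax) (Halpha : 0 < alpha) (Hr : 0 < r)
  (mu mu1 mu2 mu11 mu22 : R -> R -> R) (nu : R -> R)
  (HC2 : C2_strip tmin tmax mu mu1 mu2 mu11 mu22)
  (Hnonneg : forall xi th, tmin < th < tmax -> 0 <= mu xi th)
  (Hnu : forall xi (pr : Riemann_integrable (mu xi) tmin tmax),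
           nu xi = RiemannInt pr)
  (Hpde : forall xi th, tmin < th < tmax ->
     - c * mu1 xi th
       = th * mu11 xi th + alpha * mu22 xi th + r * mu xi th * (1 - nu xi))
  (Hbc : forall xi, mu2 xi tmin = 0 /\ mu2 xi tmax = 0)
  (Hloc : forall b, 0 < b -> exists M, forall xi, - b < xi < b -> Rabs (nu xi) <= M) :
  forall b, 0 < b -> exists C : R,
    forall xi th th', - b < xi < b -> tmin < th < tmax -> tmin < th' < tmax ->
      mu xi th <= C * mu xi th'.
Proof.
move=> b hb.
have [C0 _] := mu_regular _ _ _ _ _ _ _ HC2.
case: (pselect (exists x1 y1, - b <= x1 <= b /\ tmin <= y1 <= tmax /\ 0 < mu x1 y1))
  => [[x1 [y1 [hx1 [hy1 hpos]]]] | hzero].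
- (* mu is positive somewhere, hence on the whole rectangle: compare max and min *)
  have hposR := @positive_on_rectangle tmin tmax alpha r c mu mu1 mu2 mu11 mu22 nu
                  Htmin Htt Halpha HC2 Hnonneg Hpde Hbc Hloc b x1 y1 hb hx1 hy1 hpos.
  have [C HC] := ratio_bound_of_positive mu (- b) b tmin tmax ltac:(lra) ltac:(lra)
                   (cont_rect_of_strip _ _ _ _ _ C0) hposR.
  by exists C => xi th th' hxi hth hth'; apply: HC; lra.
- (* mu vanishes on the rectangle and C = 0 works *)
  exists 0 => xi th th' hxi hth hth'; rewrite Rmult_0_l.
  apply: Rnot_lt_le => hpos; apply: hzero.
  by exists xi, th; split; [lra | split; [lra | done]].
Qed.
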